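(* Let $M$ be a monoid in $\mathcal{C}$. Then $M$ is finitary if and only if every face submonoid of $M$ is finitary; likewise, $M$ is weakly finitary if and only if every face submonoid of $M$ is weakly finitary.
   Context: Convention: all monoids are commutative, cancellative, and reduced, written additively; $M^\bullet=M\setminus\{0\}$. $\mathcal{C}$ is the class of monoids isomorphic to a submonoid of a free commutative monoid of finite rank (equivalently, of $(\mathbb{N}^d,+)$). $M$ is regarded as a submonoid of $V=\mathbb{R}\otimes_\mathbb{Z}\mathrm{gp}(M)$; $\mathsf{cone}_V(M)$ is the set of finite nonnegative linear combinations of elements of $M$. A face of a cone $C$ is a cone $F\subseteq C$ such that whenever $x,y\in C$ and $F$ meets the open segment between $x$ and $y$, then $x,y\in F$; a face submonoid is $M\cap F$ for a face $F$ of $\mathsf{cone}_V(M)$. A monoid is a BFM if every element is a sum of atoms and each element has a finite set of factorization lengths. $M$ is finitary if it is a BFM and there exist a finite $S\subseteq M$ and a positive integer $n$ with $nM^\bullet\subseteq S+M$, where $nM^\bullet=\{x_1+\dots+x_n: x_i\in M^\bullet\}$. $M$ is weakly finitary if there exist a finite $S\subseteq M$ and a positive integer $n$ with $nx\in S+M$ for all $x\in M^\bullet$. *)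

From mathcomp Require Import all_boot.
From Stdlib Require Import Reals.
Set Implicit Arguments. Unset Strict Implicit. Unset Printing Implicit Defensive.

Definition nvec (d : nat) := 'I_d -> nat.
Definition nv0 (d : nat) : nvec d := fun _ => 0%N.
Arguments nv0 d : clear implicits.
Definition nvadd (d : nat) (x y : nvec d) : nvec d := fun i => (x i + y i)%N.
Definition nvscale (d : nat) (n : nat) (x : nvec d) : nvec d := fun i => (n * x i)%N.
Definition nvsum (d : nat) (l : seq (nvec d)) : nvec d := foldr (@nvadd d) (nv0 d) l.

(** A submonoid of (N^d, +): a monoid in the class C. *)
Definition is_submonoid (d : nat) (M : nvec d -> Prop) : Prop :=
  M (nv0 d) /\ (forall x y, M x -> M y -> M (nvadd x y)).

(** Atoms of M (M is reduced, so non-units = nonzero elements). *)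
Definition is_atom (d : nat) (M : nvec d -> Prop) (a : nvec d) : Prop :=
  M a /\ a <> nv0 d /\
  (forall y z, M y -> M z -> a = nvadd y z -> y = nv0 d \/ z = nv0 d).

Definition is_factorization (d : nat) (M : nvec d -> Prop) (x : nvec d)
  (l : seq (nvec d)) : Prop :=
  List.Forall (is_atom M) l /\ nvsum l = x.

Definition is_BFM (d : nat) (M : nvec d -> Prop) : Prop :=
  forall x, M x ->
    (exists l, is_factorization M x l) /\
    (exists s : seq nat, forall l, is_factorization M x l -> List.In (size l) s).

(** finitary: BFM and n M^bullet ⊆ S + M for a finite S ⊆ M and n >= 1. *)
Definition finitary (d : nat) (M : nvec d -> Prop) : Prop :=
  is_BFM M /\
  exists (S : seq (nvec d)) (n : nat),
    List.Forall M S /\ (0 < n)%N /\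
    forall xs : seq (nvec d), size xs = n ->
      List.Forall (fun x => M x /\ x <> nv0 d) xs ->
      exists s m, List.In s S /\ M m /\ nvsum xs = nvadd s m.

Definition weakly_finitary (d : nat) (M : nvec d -> Prop) : Prop :=
  exists (S : seq (nvec d)) (n : nat),
    List.Forall M S /\ (0 < n)%N /\
    forall x, M x -> x <> nv0 d ->
      exists s m, List.In s S /\ M m /\ nvscale n x = nvadd s m.

(** Real vectors: V = R ⊗ gp(M) is identified with its (isomorphic) image,
    the R-span of M inside R^d. *)
Definition rvec (d : nat) := 'I_d -> R.
Definition rv0 (d : nat) : rvec d := fun _ => 0%R.
Arguments rv0 d : clear implicits.
Definition rvadd (d : nat) (x y : rvec d) : rvec d := fun i => (x i + y i)%R.
Definition rvscale (d : nat) (c : R) (x : rvec d) : rvec d := fun i => (c * x i)%R.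
Definition embed (d : nat) (x : nvec d) : rvec d := fun i => INR (x i).

Definition cone (d : nat) (M : nvec d -> Prop) (v : rvec d) : Prop :=
  exists l : seq (R * nvec d),
    List.Forall (fun p => (0 <= p.1)%R /\ M p.2) l /\
    v = foldr (fun p acc => rvadd (rvscale p.1 (embed p.2)) acc) (rv0 d) l.

Definition is_cone (d : nat) (F : rvec d -> Prop) : Prop :=
  F (rv0 d) /\
  (forall x y, F x -> F y -> F (rvadd x y)) /\
  (forall c x, (0 <= c)%R -> F x -> F (rvscale c x)).

Definition is_face (d : nat) (C F : rvec d -> Prop) : Prop :=
  is_cone F /\ (forall x, F x -> C x) /\
  (forall x y t, C x -> C y -> (0 < t < 1)%R ->
     F (rvadd (rvscale (1 - t) x) (rvscale t y)) -> F x /\ F y).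

Definition face_submonoid (d : nat) (M : nvec d -> Prop) (F : rvec d -> Prop)
  : nvec d -> Prop := fun x => M x /\ F (embed x).

From mathcomp Require Import all_boot.
From Stdlib Require Import Reals.
From Stdlib Require Import Lra Classical FunctionalExtensionality PropExtensionality.
Set Implicit Arguments.

(* The backward implications are immediate once we know that cone(M) is a face
   of itself: its face submonoid M ∩ cone(M) is M itself.
   For the forward implications we isolate the one property of face submonoids
   that matters, divisor-closedness: a submonoid N ⊆ M is divisor-closed in M
   when x + y ∈ N with x, y ∈ M forces x, y ∈ N.  For such N
   - atoms of N are exactly the atoms of M lying in N, and every factorization
     in M of an element of N is a factorization in N, so BFM passes from M to N;
   - a decomposition n·x = s + m (resp. x_1 + ... + x_n = s + m) in M of an
     element of N has s, m ∈ N, so intersecting the finite set S with N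
     transfers the (weakly) finitary condition.
   Finally a face submonoid M ∩ F is divisor-closed: if x + y ∈ F then the
   midpoint of 2x, 2y ∈ cone(M) lies in F, so 2x, 2y ∈ F by the face property. *)

Section Basics.
Variable d : nat.

Lemma embed_add (x y : nvec d) : embed (nvadd x y) = rvadd (embed x) (embed y).
Proof.
  apply: functional_extensionality => i.
  by rewrite /embed /rvadd /nvadd -plusE plus_INR.
Qed.

Lemma embed_0 : embed (nv0 d) = rv0 d.
Proof. by apply: functional_extensionality. Qed.

(* Any finite list has a sublist of exactly its elements satisfying P
   (classically, P need not be decidable). *)
Lemma restrict_list {A : Type} (P : A -> Prop) (S : seq A) :
  exists S', forall s, List.In s S' <-> List.In s S /\ P s.
Proof.
  elim: S => [|a S [S' HS']]; first by exists [::] => s /=; tauto.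
  case: (classic (P a)) => Pa; [exists (a :: S') | exists S'] => s /=;
    rewrite HS'; split; try tauto.
  - by case=> [<-|[Ss Ps]]; split; auto.
  - by case=> [[E|//] Ps]; subst; case: (Pa Ps).
Qed.

Lemma submonoid_sum (M : nvec d -> Prop) (l : seq (nvec d)) :
  is_submonoid M -> List.Forall M l -> M (nvsum l).
Proof. by case=> M0 Madd; elim=> [|a l' Ma _ IH] //=; apply: Madd. Qed.

Lemma submonoid_scale (M : nvec d -> Prop) (n : nat) (x : nvec d) :
  is_submonoid M -> M x -> M (nvscale n x).
Proof.
  case=> M0 Madd Mx; elim: n => [|n IH].
  - by have -> : nvscale 0 x = nv0 d by apply: functional_extensionality.
  - have -> : nvscale n.+1 x = nvadd x (nvscale n x).
      by apply: functional_extensionality => i; rewrite /nvscale /nvadd mulSn.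
    exact: Madd.
Qed.

End Basics.

Section DivisorClosed.
Variables (d : nat) (M N : nvec d -> Prop).

Hypotheses (HM : is_submonoid M) (HN : is_submonoid N)
  (NM : forall x, N x -> M x)
  (Ndiv : forall x y, M x -> M y -> N (nvadd x y) -> N x /\ N y).

(* An atom of N is an atom of M: a splitting in M is a splitting in N. *)
Lemma atom_of_divisor_closed (a : nvec d) : is_atom N a -> is_atom M a.
Proof.
  move=> [Na [nz Ha]]; split; first exact: NM.
  split=> // y z My Mz E.
  have [Ny Nz] : N y /\ N z by apply: Ndiv; rewrite -?E.
  exact: Ha.
Qed.

Lemma divisor_closed_terms (l : seq (nvec d)) :
  List.Forall M l -> N (nvsum l) -> List.Forall N l.
Proof.
  elim=> [|a l' Ma Ml IH] //= Hs.
  have [Na Nl] := Ndiv Ma (submonoid_sum HM Ml) Hs.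
  by constructor; last exact: IH.
Qed.

Lemma factorization_of_divisor_closed (x : nvec d) (l : seq (nvec d)) :
  N x -> is_factorization M x l -> is_factorization N x l.
Proof.
  move=> Nx [Hl Hs]; split=> //.
  have Nl : List.Forall N l.
    by apply: divisor_closed_terms; [apply: List.Forall_impl Hl => a [] | rewrite Hs].
  elim: Hl Nl {Hs} => [|a l' [_ [nz Ha]] _ IH] Nl //.
  inversion Nl; subst; constructor; last exact: IH.
  by split=> //; split=> // y z Ny Nz; apply: Ha; apply: NM.
Qed.

Lemma BFM_divisor_closed : is_BFM M -> is_BFM N.
Proof.
  move=> HB x Nx; have [[l Hl] [s Hs]] := HB x (NM Nx); split.
  - by exists l; apply: factorization_of_divisor_closed.
  - exists s => l' [Hl' Hsum]; apply: Hs; split=> //.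
    exact: List.Forall_impl (@atom_of_divisor_closed) _ Hl'.
Qed.

Lemma restrict_decomposition (S : seq (nvec d)) :
  List.Forall M S ->
  exists S', List.Forall N S' /\
    forall s m, List.In s S -> M m -> N (nvadd s m) ->
      List.In s S' /\ N m.
Proof.
  move=> /List.Forall_forall MS; have [S' HS'] := restrict_list N S.
  exists S'; split; first by apply/List.Forall_forall => s /HS' [].
  move=> s m Ss Mm Nsm; have [Ns Nm] := Ndiv (MS s Ss) Mm Nsm.
  by split=> //; apply/HS'.
Qed.

Lemma finitary_divisor_closed : finitary M -> finitary N.
Proof.
  move=> [HB [S [n [MS [n_gt0 Hfin]]]]]; split; first exact: BFM_divisor_closed.
  have [S' [NS' HS']] := restrict_decomposition MS.
  exists S', n; do 2 split=> //; move=> xs size_xs Hxs.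
  have [|s [m [Ss [Mm E]]]] := Hfin xs size_xs.
    by apply: List.Forall_impl Hxs => x [/NM].
  have [S's Nm] : List.In s S' /\ N m.
    by apply: HS' => //; rewrite -E; apply: submonoid_sum HN _;
       apply: List.Forall_impl Hxs => x [].
  by exists s, m.
Qed.

Lemma weakly_finitary_divisor_closed : weakly_finitary M -> weakly_finitary N.
Proof.
  move=> [S [n [MS [n_gt0 Hfin]]]].
  have [S' [NS' HS']] := restrict_decomposition MS.
  exists S', n; do 2 split=> //; move=> x Nx nz.
  have [s [m [Ss [Mm E]]]] := Hfin x (NM Nx) nz.
  have [S's Nm] : List.In s S' /\ N m.
    by apply: HS' => //; rewrite -E; apply: submonoid_scale.
  by exists s, m.
Qed.

End DivisorClosed.

Section Cone.
Variables (d : nat) (M : nvec d -> Prop).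

Local Notation cone_sum l :=
  (foldr (fun p acc => rvadd (rvscale p.1 (embed p.2)) acc) (rv0 d) l).

Lemma cone_sum_cat (l1 l2 : seq (R * nvec d)) :
  cone_sum (l1 ++ l2) = rvadd (cone_sum l1) (cone_sum l2).
Proof.
  elim: l1 => [|p l1 IH] /=; last rewrite IH;
    by apply: functional_extensionality => i; rewrite /rvadd /rv0; ring.
Qed.

Lemma cone_sum_scale (c : R) (l : seq (R * nvec d)) :
  cone_sum (map (fun p => ((c * p.1)%R, p.2)) l) = rvscale c (cone_sum l).
Proof.
  elim: l => [|p l IH] /=; last rewrite IH;
    by apply: functional_extensionality => i; rewrite /rvadd /rvscale /rv0; ring.
Qed.

Lemma cone_scaled_element (c : R) (x : nvec d) :
  (0 <= c)%R -> M x -> cone M (rvscale c (embed x)).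
Proof.
  move=> c_ge0 Mx; exists [:: (c, x)]; split; first by constructor.
  by apply: functional_extensionality => i /=; rewrite /rvadd /rv0; ring.
Qed.

Lemma cone_is_cone : is_cone (cone M).
Proof.
  split; first by exists [::].
  split.
  - move=> _ _ [l1 [H1 ->]] [l2 [H2 ->]]; exists (l1 ++ l2).
    by split; [apply/List.Forall_app | rewrite cone_sum_cat].
  - move=> c _ c_ge0 [l [Hl ->]]; exists (map (fun p => ((c * p.1)%R, p.2)) l).
    split; last by rewrite cone_sum_scale.
    elim: Hl => [|p l' [p1_ge0 Mp2] _ IH] /=; constructor=> //.
    by split=> //=; apply: Rmult_le_pos.
Qed.

Lemma cone_is_face : is_face (cone M) (cone M).
Proof. by split; [exact: cone_is_cone | split]. Qed.

Lemma face_submonoid_cone : face_submonoid M (cone M) = M.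
Proof.
  apply: functional_extensionality => x; apply: propositional_extensionality.
  split=> [[] // | Mx]; split=> //.
  have -> : embed x = rvscale 1 (embed x).
    by apply: functional_extensionality => i; rewrite /rvscale; ring.
  by apply: cone_scaled_element; first lra.
Qed.

End Cone.

Section Face.
Variables (d : nat) (M : nvec d -> Prop) (F : rvec d -> Prop).
Hypotheses (HM : is_submonoid M) (HF : is_face (cone M) F).

Lemma face_submonoid_is_submonoid : is_submonoid (face_submonoid M F).
Proof.
  case: HM => M0 Madd; case: HF => [[F0 [Fadd _]] _].
  split; first by split; rewrite ?embed_0.
  by move=> x y [Mx Fx] [My Fy]; split; [apply: Madd | rewrite embed_add; apply: Fadd].
Qed.

(* If x + y ∈ F with x, y ∈ M, then the midpoint of 2x and 2y lies in F,
   hence 2x and 2y lie in F, and so do x and y. *)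
Lemma face_submonoid_divisor_closed (x y : nvec d) :
  M x -> M y -> face_submonoid M F (nvadd x y) ->
  face_submonoid M F x /\ face_submonoid M F y.
Proof.
  move=> Mx My [_ Fxy]; case: HF => [[_ [_ Fscale]] [_ Fface]].
  have double z : embed z = rvscale (/2) (rvscale 2 (embed z)).
    by apply: functional_extensionality => i; rewrite /rvscale; field.
  have [F2x F2y] : F (rvscale 2 (embed x)) /\ F (rvscale 2 (embed y)).
    apply: (Fface _ _ (/2)%R); try apply: cone_scaled_element => //; try lra.
    suff -> : rvadd (rvscale (1 - / 2) (rvscale 2 (embed x)))
                    (rvscale (/ 2) (rvscale 2 (embed y))) = embed (nvadd x y) by [].
    by rewrite embed_add; apply: functional_extensionality => i;
       rewrite /rvadd /rvscale; field.
  by split; split; rewrite // double; apply: Fscale => //; lra.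
Qed.

End Face.

Theorem mainTheorem16 (d : nat) (M : nvec d -> Prop) (HM : is_submonoid M) :
  (finitary M <->
     forall F : rvec d -> Prop, is_face (cone M) F -> finitary (face_submonoid M F)) /\
  (weakly_finitary M <->
     forall F : rvec d -> Prop, is_face (cone M) F -> weakly_finitary (face_submonoid M F)).
Proof.
  have face_props F (HF : is_face (cone M) F) :=
    (face_submonoid_is_submonoid HM HF, fun x (Nx : face_submonoid M F x) => proj1 Nx,
     face_submonoid_divisor_closed HF).
  do 2 split.
  - move=> Mfin F /face_props [[HN NM] Ndiv].
    exact: finitary_divisor_closed HM HN NM Ndiv Mfin.
  - by move=> Hfaces; rewrite -(face_submonoid_cone M); apply/Hfaces/cone_is_face.
  - move=> Mwfin F /face_props [[HN NM] Ndiv].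
    exact: weakly_finitary_divisor_closed HN NM Ndiv Mwfin.
  - by move=> Hfaces; rewrite -(face_submonoid_cone M); apply/Hfaces/cone_is_face.
Qed.
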